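(* Let $\kappa$ be an uncountable cardinal and let $X$, $Y$ be non-trivial Banach spaces. If $X$ is $\mathrm{ASQ}_{<\kappa}$ (respectively, $\mathrm{SQ}_{<\kappa}$), then the injective tensor product $X\widehat{\otimes}_\varepsilon Y$ is $\mathrm{ASQ}_{<\kappa}$ (respectively, $\mathrm{SQ}_{<\kappa}$).
   Context: $X\widehat{\otimes}_\varepsilon Y$ is the closure, in the operator norm, of the finite-rank operators from $Y^*$ to $X$. A Banach space $Z$ is $\mathrm{ASQ}_{<\kappa}$ if for every set $A\subset S_Z$ with $|A|<\kappa$ and every $\varepsilon>0$ there exists $y\in S_Z$ with $\|x\pm y\|\le 1+\varepsilon$ for all $x\in A$; $Z$ is $\mathrm{SQ}_{<\kappa}$ if for every such $A$ there exists $y\in S_Z$ with $\|x\pm y\|\le 1$ for all $x\in A$. *)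

From HB Require Import structures.
From mathcomp Require Import all_boot all_order all_algebra.
From mathcomp Require Import all_classical all_reals all_analysis.
Set Implicit Arguments. Unset Strict Implicit. Unset Printing Implicit Defensive.
Import Order.TTheory GRing.Theory Num.Theory.
Import numFieldNormedType.Exports.
Local Open Scope classical_set_scope.
Local Open Scope ring_scope.

(* |A| < kappa, where the cardinal kappa is represented by a type K *)
Definition card_lt_type {T : Type} (A : set T) (K : Type) :=
  (A #<= [set: K])%card /\ ~ ([set: K] #<= A)%card.

Section Defs.
Variable R : realType.

Definition dual (Y : normedModType R) : set (Y -> R) :=
  [set phi | (forall (a : R) (u v : Y), phi (a *: u + v) = a * phi u + phi v)
          /\ exists M : R, forall y : Y, `|phi y| <= M * `|y| ].

Definition dnorm (Y : normedModType R) (phi : Y -> R) : R :=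
  sup [set `|phi y| | y in [set y : Y | `|y| <= 1]].

Definition opnorm (X Y : normedModType R) (T : (Y -> R) -> X) : R :=
  sup [set `|T phi| | phi in [set phi | dual phi /\ dnorm phi <= 1]].

Definition bdd_op (X Y : normedModType R) : set ((Y -> R) -> X) :=
  [set T | (forall phi, ~ dual phi -> T phi = 0)
        /\ (forall (a : R) phi psi, dual phi -> dual psi ->
              T (fun y => a * phi y + psi y) = a *: T phi + T psi)
        /\ exists M : R, forall phi, dual phi -> `|T phi| <= M * dnorm phi].

(* X \hat\otimes_eps Y : operator-norm closure of the elementary tensors
   sum_i y_i (x) x_i, acting as phi |-> sum_i phi(y_i) x_i *)
Definition inj_tensor (X Y : normedModType R) : set ((Y -> R) -> X) :=
  [set T | bdd_op T /\
     forall e : R, 0 < e -> exists (n : nat) (x : 'I_n -> X) (y : 'I_n -> Y),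
        opnorm (fun phi => T phi - \sum_(i < n) phi (y i) *: x i) < e].

(* ASQ_{<kappa} and SQ_{<kappa} for a (sub)space Z of V with norm N *)
Definition ASQ_lt (V : zmodType) (Z : set V) (N : V -> R) (K : Type) :=
  forall A : set V, A `<=` Z -> (forall x, A x -> N x = 1) -> card_lt_type A K ->
  forall e : R, 0 < e -> exists y, Z y /\ N y = 1 /\
     forall x, A x -> N (x + y) <= 1 + e /\ N (x - y) <= 1 + e.

Definition SQ_lt (V : zmodType) (Z : set V) (N : V -> R) (K : Type) :=
  forall A : set V, A `<=` Z -> (forall x, A x -> N x = 1) -> card_lt_type A K ->
  exists y, Z y /\ N y = 1 /\
     forall x, A x -> N (x + y) <= 1 /\ N (x - y) <= 1.

End Defs.

From HB Require Import structures.
From mathcomp Require Import all_boot all_order all_algebra.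
From mathcomp Require Import all_classical all_reals all_analysis.
From mathcomp Require Import ring lra.
Import Order.TTheory GRing.Theory Num.Theory.
Import numFieldNormedType.Exports.
Local Open Scope classical_set_scope.
Local Open Scope ring_scope.

(* Approximate each of the fewer than kappa norm-one tensors T by finite-rank
   operators phi |-> sum_i phi(y_i) x_i.  Every value T phi then lies, up to an
   arbitrarily small error, on a ray through one of countably many unit vectors
   (normalised rational combinations of the x_i).  As kappa is uncountable,
   these directions form a set B of fewer than kappa * aleph_0 = kappa unit
   vectors, and (A)SQ in X gives x0 with ||b +- x0|| <= c on B.  By convexity
   ||s b + t x0|| <= c whenever |s|, |t| <= 1, hence ||T phi +- phi(y0) x0|| <= c
   for ||y0|| = 1, i.e. ||T +- y0 (x) x0|| <= c; the elementary tensor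
   y0 (x) x0 has norm 1 by the Hahn-Banach theorem. *)

Lemma card_le_inj {T U : Type} (A : set T) (B : set U) (f : T -> U) :
  (forall a, A a -> B (f a)) -> {in A &, injective f} -> (A #<= B)%card.
Proof.
move=> AB injf; have : $|{injfun A >-> B}| by apply/injfunPex; exists f.
by case=> g; exact: inj_card_le g.
Qed.

Lemma infinite_set_nat_inj {T : Type} (A : set T) : infinite_set A ->
  exists2 h : nat -> T, (forall n, A (h n)) & injective h.
Proof.
elim/Ppointed: T A => T A.
  by rewrite (empty_eq0 A) => /(_ (finite_set0 _)).
move=> /infiniteP /pcard_leP [h]; exists h => [n|m n hmn].
  exact: (@funS _ _ _ _ h n).
by apply: (@inj _ _ _ h); rewrite ?inE.
Qed.

Section InfiniteTimesNat.
Variables (T : Type) (A : set T).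

(* [G] is the graph of an injection [D `*` [set: nat] -> D] for the set [D]
   of first coordinates of its domain, with [D `<=` A]. *)
Definition partial_pairing (G : set ((T * nat) * T)) : Prop :=
  [/\ forall a n b, G ((a, n), b) -> A a,
      forall a n b m, G ((a, n), b) -> exists c, G ((a, m), c),
      forall p b, G (p, b) -> exists c, G ((b, 0%N), c),
      forall p b c, G (p, b) -> G (p, c) -> b = c &
      forall p q b, G (p, b) -> G (q, b) -> p = q].

Definition pairing_dom (G : set ((T * nat) * T)) : set T :=
  [set a | exists n b, G ((a, n), b)].

Lemma partial_pairing_bigcup (F : set (set ((T * nat) * T))) :
  F `<=` partial_pairing -> total_on F subset ->
  partial_pairing (\bigcup_(G in F) G).
Proof.
move=> FP totF; have among G H p b q c : F G -> F H -> G (p, b) -> H (q, c) ->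
    exists2 M, F M & M (p, b) /\ M (q, c).
  move=> FG FH Gpb Hqc; have [GH|HG] := totF _ _ FG FH.
    by exists H => //; split=> //; exact: GH.
  by exists G => //; split=> //; exact: HG.
split.
- by move=> a n b [G /FP[GA _ _ _ _] /GA].
- move=> a n b m [G FG Gb]; have [_ + _ _ _] := FP G FG.
  by move=> /(_ _ _ _ m Gb) [c Gc]; exists c, G.
- move=> p b [G FG Gb]; have [_ _ + _ _] := FP G FG.
  by move=> /(_ _ _ Gb) [c Gc]; exists c, G.
- move=> p b c [G FG Gb] [H FH Hc].
  have [M /FP[_ _ _ Mfun _] [Mb Mc]] := among _ _ _ _ _ _ FG FH Gb Hc.
  exact: Mfun Mb Mc.
- move=> p q b [G FG Gb] [H FH Hc].
  have [M /FP[_ _ _ _ Minj] [Mb Mc]] := among _ _ _ _ _ _ FG FH Gb Hc.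
  exact: Minj Mb Mc.
Qed.

Lemma maximal_pairing_cofinite (G : set ((T * nat) * T)) :
  partial_pairing G -> (forall H, G `<` H -> ~ partial_pairing H) ->
  finite_set (A `\` pairing_dom G).
Proof.
move=> [GA Gdom Grng Gfun Ginj] Gmax; apply: contrapT.
move=> /infinite_set_nat_inj [h hA hinj].
have hD i : ~ pairing_dom G (h i) by have [] := hA i.
pose pk (i n : nat) := pickle (i, n).
have pk_inj i j n m : pk i n = pk j m -> i = j /\ n = m.
  by move/(pcan_inj pickleK) => [-> ->].
pose N := [set z | exists i n, z = ((h i, n), h (pk i n))].
have GNdom p b c : G (p, b) -> ~ N (p, c).
  by move=> Gb [i [n [Ep _]]]; apply: (hD i); exists n, b; rewrite -Ep.
have GNrng p b q : G (p, b) -> ~ N (q, b).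
  move=> /Grng[c Gc] [i [n [_ Eb]]]; apply: (hD (pk i n)).
  by exists 0%N, c; rewrite -Eb.
apply: (Gmax (G `|` N)); last split.
- split; first exact: subsetUl.
  move=> /(_ ((h 0%N, 0%N), h (pk 0%N 0%N))) /(_ (or_intror _)) GN.
  by apply: GNdom (GN _) _; exists 0%N, 0%N.
- by move=> a n b [/GA//|[i [m [-> _ _]]]]; have [] := hA i.
- move=> a n b m [/(Gdom _ _ _ m)[c Gc]|[i [k [-> _ _]]]]; first by exists c; left.
  by exists (h (pk i m)); right; exists i, m.
- move=> p b [/Grng[c Gc]|[i [k [_ ->]]]]; first by exists c; left.
  by exists (h (pk (pk i k) 0%N)); right; exists (pk i k), 0%N.
- move=> p b c [Gb|Nb] [Gc|Nc]; first exact: Gfun Gb Gc.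
  + by case: (GNdom _ _ _ Gb Nc).
  + by case: (GNdom _ _ _ Gc Nb).
  + by move: Nb Nc => [i [n [-> ->]]] [j [m [/hinj <- <- ->]]].
- move=> p q b [Gb|Nb] [Gc|Nc]; first exact: Ginj Gb Gc.
  + by case: (GNrng _ _ _ Gb Nc).
  + by case: (GNrng _ _ _ Gc Nb).
  + move: Nb Nc => [i [n [-> ->]]] [j [m [-> /hinj /pk_inj[-> ->]]]] //.
Qed.

Lemma exists_cofinite_pairing : exists D : set T,
  [/\ D `<=` A, finite_set (A `\` D) &
      exists2 g : T * nat -> T, (forall p, D p.1 -> D (g p)) &
        forall p q, D p.1 -> D q.1 -> g p = g q -> p = q].
Proof.
have [G [[GA Gdom Grng Gfun Ginj] Gmax]] := Zorn_bigcup partial_pairing_bigcup.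
exists (pairing_dom G); split.
- by move=> a [n [b /GA]].
- by apply: maximal_pairing_cofinite.
have /choice [g Gg] : forall p : T * nat,
    exists b, pairing_dom G p.1 -> G (p, b).
  move=> [a n]; have [[m [b /(Gdom _ _ _ n)[c Gc]]]|nD] := pselect (pairing_dom G a).
    by exists c.
  by exists a.
exists g => [p /Gg /Grng[c Gc]|p q /Gg Gp /Gg Gq gpq]; first by exists 0%N, c.
by rewrite gpq in Gp; exact: Ginj Gp Gq.
Qed.

Lemma card_setX_nat_le : infinite_set A -> (A `*` [set: nat] #<= A)%card.
Proof.
move=> Ainf; have [D [DA cofD [g gD ginj]]] := exists_cofinite_pairing.
have [d0 Dd0] : D !=set0.
  apply/set0P/negP => /eqP D0; apply: Ainf.
  by move: cofD; rewrite D0 setD0.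
have [idx idx_inj] := countable_injP _ (finite_set_countable cofD).
pose f (p : T * nat) : T :=
  if `[< D p.1 >] then g (p.1, pickle (false, (p.2, 0%N)))
  else g (d0, pickle (true, (idx p.1, p.2))).
apply: (@card_le_inj _ _ _ _ f) => [[a n] [Aa _]|[a n] [b m]].
  by rewrite /f /=; case: ifPn => /asboolP Da; apply/DA/gD.
rewrite !inE => -[Aa _] [Ab _]; rewrite /f /=.
have pickleI (C : countType) : injective (@pickle C) := pcan_inj pickleK.
case: ifPn => /asboolP Da; case: ifPn => /asboolP Db /ginj.
- by move=> /(_ Da Db) /pair_equal_spec[-> /pickleI[->]].
- by move=> /(_ Da Dd0) /pair_equal_spec[_ /pickleI].
- by move=> /(_ Dd0 Db) /pair_equal_spec[_ /pickleI].
move=> /(_ Dd0 Dd0) /pair_equal_spec[_ /pickleI[/idx_inj]].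
by rewrite !inE => -> // ->.
Qed.

End InfiniteTimesNat.
Arguments card_setX_nat_le {T A}.

Lemma card_bigcup_countable_le I T (A : set I) (F : I -> set T) :
  (forall i, A i -> countable (F i)) ->
  (\bigcup_(i in A) F i #<= A `*` [set: nat])%card.
Proof.
move=> Fcount; have [/eqP ->|/set0P[i0 Ai0]] := boolP (A == set0).
  by rewrite bigcup_set0; exact: card_ge0.
have /choice [idx idxP] : forall i, exists f : T -> nat, A i -> {in F i &, injective f}.
  move=> i; have [/Fcount/countable_injP[f finj]|nAi] := pselect (A i).
    by exists f.
  by exists (fun=> 0%N).
have /choice [w wP] : forall x, exists i, (\bigcup_(i in A) F i) x -> A i /\ F i x.
  move=> x; have [[i Ai Fx]|nx] := pselect ((\bigcup_(i in A) F i) x).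
    by exists i.
  by exists i0.
apply: (@card_le_inj _ _ _ _ (fun x => (w x, idx (w x) x))).
  by move=> x /wP[Awx _].
move=> x y; rewrite !inE => /wP[Ax Fx] /wP[Ay Fy] /pair_equal_spec[wxy].
by rewrite -wxy in Fy *; apply: (idxP _ Ax); rewrite inE.
Qed.

Section CardLtType.
Context {K : Type} (Kunc : ~ countable [set: K]).

Lemma card_lt_type_le {T U : Type} {A : set T} {B : set U} :
  (B #<= A)%card -> card_lt_type A K -> card_lt_type B K.
Proof.
move=> BA [AK KA]; split; first exact: card_le_trans BA AK.
by move=> KB; apply: KA; apply: card_le_trans KB BA.
Qed.

Lemma card_lt_type_setX_nat {T : Type} {A : set T} :
  card_lt_type A K -> card_lt_type (A `*` [set: nat]) K.
Proof.
move=> [AK KA]; have [Afin|Ainf] := pselect (finite_set A).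
  have cA : countable (A `*` [set: nat]).
    exact: countableX (finite_set_countable Afin) (countableP _).
  split; last by move=> KA'; apply: Kunc; exact: card_le_trans KA' cA.
  apply: card_le_trans cA _; apply/infiniteP => /finite_set_countable.
  exact: Kunc.
have AnatA := card_setX_nat_le Ainf.
split; first exact: card_le_trans AnatA AK.
by move=> KA'; apply: KA; exact: card_le_trans KA' AnatA.
Qed.

Lemma card_lt_type_bigcup_countable {I T : Type} {A : set I} {F : I -> set T} :
  card_lt_type A K -> (forall i, A i -> countable (F i)) ->
  card_lt_type (\bigcup_(i in A) F i) K.
Proof.
move=> AK /card_bigcup_countable_le UA.
exact: card_lt_type_le UA (card_lt_type_setX_nat AK).
Qed.

End CardLtType.

Section HahnBanach.
Context {R : realType} {Y : normedModType R}.

Definition linear_form (phi : Y -> R) : Prop :=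
  forall (a : R) (u v : Y), phi (a *: u + v) = a * phi u + phi v.

Lemma linear_form0 phi : linear_form phi -> phi 0 = 0.
Proof.
move=> phi_lin; have := phi_lin 1 0 0; rewrite scale1r addr0 mul1r => E.
by apply: (@addrI _ (phi 0)); rewrite addr0 -E.
Qed.

Lemma linear_formN phi y : linear_form phi -> phi (- y) = - phi y.
Proof.
move=> phi_lin; have := phi_lin (-1) y 0.
by rewrite scaleN1r addr0 linear_form0 // addr0 mulN1r.
Qed.

Definition dominated_linear_graph (G : set (Y * R)) : Prop :=
  [/\ forall u a b, G (u, a) -> G (u, b) -> a = b,
      forall l u a v b, G (u, a) -> G (v, b) -> G (l *: u + v, l * a + b) &
      forall u a, G (u, a) -> a <= `|u|].

Definition graph_extension (G : set (Y * R)) (z : Y) (c : R) : set (Y * R) :=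
  [set p | exists u a t, G (u, a) /\ p = (u + t *: z, a + t * c)].

Lemma dominated_linear_graph_bigcup (F : set (set (Y * R))) :
  F `<=` dominated_linear_graph -> total_on F subset ->
  dominated_linear_graph (\bigcup_(G in F) G).
Proof.
move=> FP totF; have among G H p q : F G -> F H -> G p -> H q ->
    exists2 M, F M & M p /\ M q.
  move=> FG FH Gp Hq; have [GH|HG] := totF _ _ FG FH.
    by exists H => //; split=> //; exact: GH.
  by exists G => //; split=> //; exact: HG.
split.
- move=> u a b [G FG Ga] [H FH Hb].
  have [M /FP[Mfun _ _] [Ma Mb]] := among _ _ _ _ FG FH Ga Hb.
  exact: Mfun Ma Mb.
- move=> l u a v b [G FG Ga] [H FH Hb].
  have [M FM [Ma Mb]] := among _ _ _ _ FG FH Ga Hb.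
  by have [_ Mlin _] := FP M FM; exists M => //; exact: Mlin.
- by move=> u a [G /FP[_ _ Gdom] /Gdom].
Qed.

Section Extension.
Variables (G : set (Y * R)) (z : Y) (c : R).
Hypothesis (Gdlg : dominated_linear_graph G).
Hypothesis (c_ge : forall u a, G (u, a) -> a - `|u - z| <= c).
Hypothesis (c_le : forall v b, G (v, b) -> c <= `|v + z| - b).

Lemma dominated_linear_graphZ l {u a} : G (u, a) -> G (l *: u, l * a).
Proof.
have [_ Glin _] := Gdlg => Ga; have G00 : G (0, 0).
  by have := Glin (-1) _ _ _ _ Ga Ga; rewrite scaleN1r addNr mulN1r addNr.
by have := Glin l _ _ _ _ Ga G00; rewrite !addr0.
Qed.

Lemma graph_extension_dominated u a t :
  G (u, a) -> a + t * c <= `|u + t *: z|.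
Proof.
have [_ _ Gdom] := Gdlg => Ga.
have [t_lt0|t_gt0|->] := ltgtP t 0; last by rewrite mul0r scale0r !addr0; exact: Gdom.
- have s_gt0 : 0 < - t by rewrite oppr_gt0.
  have := c_ge _ _ (dominated_linear_graphZ (- t)^-1 Ga).
  have -> : (- t)^-1 *: u - z = (- t)^-1 *: (u + t *: z).
    by rewrite scalerDr scalerA invrN mulNr mulVf ?lt_eqF // scaleN1r.
  rewrite normrZ gtr0_norm ?invr_gt0 // -mulrBr ler_pdivrMl //.
  rewrite mulNr; lra.
- have := c_le _ _ (dominated_linear_graphZ t^-1 Ga).
  have -> : t^-1 *: u + z = t^-1 *: (u + t *: z).
    by rewrite scalerDr scalerA mulVf ?gt_eqF // scale1r.
  rewrite normrZ gtr0_norm ?invr_gt0 // -mulrBr ler_pdivlMl //; lra.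
Qed.

Lemma dominated_linear_graph_extension : ~ (exists a, G (z, a)) ->
  dominated_linear_graph (graph_extension G z c).
Proof.
have [Gfun Glin _] := Gdlg => zG; split.
- move=> w a b [u [a1 [t [Ga1 [Ew ->]]]]] [v [a2 [s [Ga2 [Ew' ->]]]]].
  have [ts|ts] := eqVneq t s.
    have uv : u = v by apply: (addIr (t *: z)); rewrite -Ew ts.
    by rewrite ts (Gfun _ _ _ Ga1 (_ : G (u, a2))) // uv.
  exfalso; apply: zG; exists ((t - s)^-1 * (a2 - a1)).
  have -> : z = (t - s)^-1 *: (v - u).
    apply: (scalerI (_ : t - s != 0)); first by rewrite subr_eq0.
    rewrite scalerA mulfV ?subr_eq0 // scale1r scalerBl.
    have -> : t *: z - s *: z = (u + t *: z) - (u + s *: z).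
      by rewrite opprD addrACA subrr add0r.
    by rewrite -Ew Ew' opprD addrACA subrr addr0.
  apply: dominated_linear_graphZ.
  by have := Glin (-1) _ _ _ _ Ga1 Ga2; rewrite scaleN1r mulN1r !(addrC (- _)).
- move=> l w a w' b [u [a1 [t [Ga1 [-> ->]]]]] [v [a2 [s [Ga2 [-> ->]]]]].
  exists (l *: u + v), (l * a1 + a2), (l * t + s); split; first exact: Glin.
  congr (_, _); last by ring.
  by rewrite scalerDr scalerA scalerDl addrACA.
- by move=> w a [u [a1 [t [Ga1 [-> ->]]]]]; exact: graph_extension_dominated.
Qed.

Lemma graph_extension_proper : G (0, 0) -> ~ (exists a, G (z, a)) ->
  G `<` graph_extension G z c.
Proof.
move=> G00 zG; split=> [[u a] Ga|/(_ (z, c)) Gzc].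
  by exists u, a, 0; rewrite scale0r mul0r !addr0.
by apply: zG; exists c; apply: Gzc; exists 0, 0, 1; rewrite scale1r mul1r !add0r.
Qed.

End Extension.

Lemma graph_extension_constant (G : set (Y * R)) (z : Y) :
  dominated_linear_graph G -> G !=set0 ->
  exists c, (forall u a, G (u, a) -> a - `|u - z| <= c) /\
            (forall v b, G (v, b) -> c <= `|v + z| - b).
Proof.
move=> [_ Glin Gdom] [[u0 a0] Gp0].
have sep u a v b : G (u, a) -> G (v, b) -> a - `|u - z| <= `|v + z| - b.
  move=> Ga Gb; have := Gdom _ _ (Glin 1 _ _ _ _ Ga Gb); rewrite scale1r mul1r.
  have : `|u + v| <= `|u - z| + `|v + z|.
    by rewrite -[u + v]addr0 -(addNr z) addrACA ler_normD.
  lra.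
pose L := [set p.2 - `|p.1 - z| | p in G].
have L0 : L !=set0 by exists (a0 - `|u0 - z|), (u0, a0).
have hasL : has_sup L.
  by split=> //; exists (`|u0 + z| - a0) => _ [[u a] Ga <-]; exact: sep.
exists (sup L); split=> [u a Ga|v b Gb].
  by apply: sup_upper_bound => //; exists (u, a).
by apply: ge_sup => // _ [[u a] Ga <-]; exact: sep.
Qed.

Lemma dominated_linear_graph0 : dominated_linear_graph [set (0, 0)].
Proof.
split=> [u a b [_ ->] [_ ->]//|l u a v b [-> ->] [-> ->]|u a [-> ->]].
  by rewrite scaler0 mulr0 !addr0.
by rewrite normr0.
Qed.

Theorem hahn_banach_norming (y0 : Y) : exists phi : Y -> R,
  [/\ linear_form phi, forall y, phi y <= `|y| & phi y0 = `|y0|].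
Proof.
have [->|y0_neq0] := eqVneq y0 0.
  by exists (fun=> 0); split=> [a u v|y|]; rewrite ?mulr0 ?addr0 ?normr0.
(* [Zorn_bigcup] needs [P set0], whence the guard [G !=set0]. *)
pose P G := dominated_linear_graph G /\ (G !=set0 -> G (y0, `|y0|)).
have Pchain F : F `<=` P -> total_on F subset -> P (\bigcup_(G in F) G).
  move=> FP totF; split.
    by apply: dominated_linear_graph_bigcup => // G /FP[].
  by move=> [p [G FG Gp]]; exists G => //; apply: (FP G FG).2; exists p.
have [G [[Gdlg Gy0] Gmax]] := Zorn_bigcup Pchain.
have [Gfun Glin Gdom] := Gdlg.
have [[u0 a0] Gp0] : G !=set0.
  apply: contrapT => /set0P/negP/negbNE/eqP G0.
  pose G1 := graph_extension [set (0, 0)] y0 `|y0|.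
  have G1y0 : G1 (y0, `|y0|).
    by exists 0, 0, 1; rewrite scale1r mul1r !add0r.
  apply: (Gmax G1); first by rewrite G0; split=> [//|/(_ _ G1y0)].
  split=> [|_ //]; apply: dominated_linear_graph_extension dominated_linear_graph0 _ _ _.
  - move=> u a [-> ->]; rewrite !sub0r normrN; have := normr_ge0 y0; lra.
  - by move=> v b [-> ->]; rewrite add0r subr0.
  - by move=> [a /= [/eqP]]; rewrite (negbTE y0_neq0).
have Gne : G !=set0 by exists (u0, a0).
have G00 : G (0, 0) by have := dominated_linear_graphZ _ Gdlg 0 Gp0; rewrite scale0r mul0r.
have /choice [phi Gphi] : forall z, exists a, G (z, a).
  move=> z; apply: contrapT => zG.
  have [c [c_ge c_le]] := graph_extension_constant _ z Gdlg Gne.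
  apply: (Gmax (graph_extension G z c)).
    exact: graph_extension_proper.
  split; first exact: dominated_linear_graph_extension.
  by move=> _; exists y0, `|y0|, 0; rewrite scale0r mul0r !addr0; split=> //; exact: Gy0.
exists phi; split=> [a u v|y|].
- by apply: Gfun (Gphi _) _; apply: Glin; apply: Gphi.
- exact: Gdom (Gphi y).
- exact: Gfun (Gphi y0) (Gy0 Gne).
Qed.

End HahnBanach.

Section DualSpace.
Context {R : realType} {Y : normedModType R}.
Implicit Types (phi psi : Y -> R) (y : Y).

Definition dual_ball : set (Y -> R) := [set phi | dual phi /\ dnorm phi <= 1].

Lemma dual0 {phi} : dual phi -> phi 0 = 0.
Proof. by move=> [/linear_form0]. Qed.

Lemma dualZ {phi} : dual phi -> forall k y, phi (k *: y) = k * phi y.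
Proof.
move=> Dphi k y; have [phi_lin _] := Dphi.
by rewrite -[k *: y]addr0 phi_lin (dual0 Dphi) addr0.
Qed.

Lemma dual_le_dnorm {phi} : dual phi -> forall y, `|y| <= 1 -> `|phi y| <= dnorm phi.
Proof.
move=> [_ [M phiM]] y y1; apply: ub_le_sup; last by exists y.
exists `|M| => _ [x /= x1 <-]; apply: le_trans (phiM x) _.
apply: le_trans (ler_wpM2r (normr_ge0 x) (ler_norm M)) _.
by rewrite ler_piMr.
Qed.

Lemma dnorm_ge0 {phi} : dual phi -> 0 <= dnorm phi.
Proof.
by move=> Dphi; have := dual_le_dnorm Dphi 0; rewrite (dual0 Dphi) !normr0 ler01 => /(_ isT).
Qed.

Lemma dual_le_dnormM {phi} : dual phi -> forall y, `|phi y| <= dnorm phi * `|y|.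
Proof.
move=> Dphi y; have [->|y_neq0] := eqVneq y 0.
  by rewrite (dual0 Dphi) !normr0 mulr0.
have y_gt0 : 0 < `|y| by rewrite normr_gt0.
have := dual_le_dnorm Dphi (`|y|^-1 *: y).
rewrite normrZ normfV normr_id mulVf ?gt_eqF // lexx => /(_ isT).
by rewrite dualZ // normrM normfV normr_id ler_pdivrMl // mulrC.
Qed.

Lemma dual_ball0 : dual_ball (fun=> 0).
Proof.
split; first by split=> [a u v|]; [rewrite mulr0 addr0|exists 0 => y; rewrite normr0 mul0r].
apply: ge_sup; first by exists 0, 0; rewrite /= ?normr0 ?ler01.
by move=> _ [y _ <-]; rewrite normr0 ler01.
Qed.

Lemma dualD_scale a phi psi : dual phi -> dual psi ->
  dual (fun y => a * phi y + psi y).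
Proof.
move=> Dphi Dpsi; split.
  by move=> b u v; case: Dphi Dpsi => [phi_lin _] [psi_lin _]; rewrite phi_lin psi_lin; ring.
exists (`|a| * dnorm phi + dnorm psi) => y.
apply: le_trans (ler_normD _ _) _; rewrite normrM mulrDl -mulrA.
apply: lerD; last exact: dual_le_dnormM.
by apply: ler_wpM2l => //; exact: dual_le_dnormM.
Qed.

Lemma exists_norming_dual y : exists2 psi, dual_ball psi & psi y = `|y|.
Proof.
have [psi [psi_lin psi_le psi_y]] := hahn_banach_norming y.
have psi_abs x : `|psi x| <= `|x|.
  by rewrite ler_norml psi_le andbT lerNl -linear_formN // -normrN psi_le.
exists psi => //; split; first by split=> //; exists 1 => x; rewrite mul1r.
apply: ge_sup; first by exists `|psi 0|, 0; rewrite /= ?normr0 ?ler01.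
by move=> _ [x x1 <-]; exact: le_trans (psi_abs x) x1.
Qed.

Context {X : normedModType R}.
Implicit Type T : (Y -> R) -> X.

Lemma le_opnorm {T B phi} : (forall psi, dual_ball psi -> `|T psi| <= B) ->
  dual_ball phi -> `|T phi| <= opnorm T.
Proof.
move=> TB phi1; apply: ub_le_sup; last by exists phi.
by exists B => _ [psi psi1 <-]; exact: TB.
Qed.

Lemma opnorm_le T B : (forall phi, dual_ball phi -> `|T phi| <= B) -> opnorm T <= B.
Proof.
move=> TB; apply: ge_sup; first by exists `|T (fun=> 0)|, (fun=> 0); first exact: dual_ball0.
by move=> _ [psi psi1 <-]; exact: TB.
Qed.

Lemma bdd_op_bounded T : bdd_op T ->
  exists B, forall phi, dual_ball phi -> `|T phi| <= B.
Proof.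
move=> [_ [_ [M TM]]]; exists `|M| => phi [Dphi phi1].
apply: le_trans (TM _ Dphi) _.
apply: le_trans (ler_wpM2r (dnorm_ge0 Dphi) (ler_norm M)) _.
by rewrite ler_piMr.
Qed.

Lemma bdd_op_le_opnorm T phi : bdd_op T -> dual_ball phi -> `|T phi| <= opnorm T.
Proof. by move=> /bdd_op_bounded[B TB]; exact: le_opnorm TB. Qed.

End DualSpace.

Section SquareGeometry.
Context {R : realType} {X : normedModType R}.
Implicit Types (b u x : X) (c d r s t : R).

Lemma norm_convex_le (p q : X) c l : `|p| <= c -> `|q| <= c ->
  0 <= l <= 1 -> `|l *: p + (1 - l) *: q| <= c.
Proof.
move=> pc qc /andP[l_ge0 l_le1]; apply: le_trans (ler_normD _ _) _.
rewrite !normrZ (ger0_norm l_ge0) ger0_norm ?subr_ge0 //.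
have := ler_wpM2l l_ge0 pc; have := ler_wpM2l (_ : 0 <= 1 - l) qc.
by rewrite subr_ge0 => /(_ l_le1); lra.
Qed.

Lemma norm_scaleD_le b x c s : `|b + x| <= c -> `|b - x| <= c -> `|s| <= 1 ->
  `|s *: b + x| <= c.
Proof.
move=> bxc bxc' /[!ler_norml] /andP[s_ge s_le].
have -> : s *: b + x = ((1 + s) / 2) *: (b + x) + (1 - (1 + s) / 2) *: (- (b - x)).
  rewrite opprB scalerDr scalerBr (addrC (_ *: x)) addrACA -scalerBl -scalerDl.
  by rewrite -{1}[x]scale1r; congr (_ *: _ + _ *: _); field.
by apply: norm_convex_le; rewrite ?normrN // divr_ge0 ?ler_pdivrMr /=; lra.
Qed.

Lemma norm_scaleD_scale_le b x c s t : `|b + x| <= c -> `|b - x| <= c ->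
  `|s| <= 1 -> `|t| <= 1 -> `|s *: b + t *: x| <= c.
Proof.
move=> bxc bxc' s1 t1; have sbx : `|s *: b + x| <= c by exact: norm_scaleD_le.
have sbx' : `|s *: b - x| <= c by apply: norm_scaleD_le; rewrite ?opprK.
by rewrite addrC; apply: norm_scaleD_le; rewrite // (addrC, distrC).
Qed.

Lemma norm_addZ_le_of_near_ray {u b x c r t d} : `|u| <= 1 -> `|b| = 1 -> 0 <= r ->
  `|u - r *: b| <= d -> `|b + x| <= c -> `|b - x| <= c -> `|t| <= 1 ->
  `|u + t *: x| <= c + 2 * d.
Proof.
move=> u1 b1 r_ge0 ud bxc bxc' t1; pose s := Num.min r 1.
have rd : r - s <= d.
  have [r_le1|r_gt1] := leP r 1; first by rewrite /s min_l // subrr (le_trans _ ud).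
  rewrite /s (min_r (ltW r_gt1)).
  have : `|r *: b| <= `|u| + `|u - r *: b|.
    by have := ler_normD u (r *: b - u); rewrite addrC subrK distrC.
  rewrite normrZ b1 mulr1 ger0_norm // => rud; lra.
have sbx : `|s *: b + t *: x| <= c.
  apply: norm_scaleD_scale_le => //.
  by rewrite ger0_norm /s ?ge_min ?lexx ?orbT // le_min r_ge0 ler01.
have -> : u + t *: x = (s *: b + t *: x) + (u - r *: b) + (r - s) *: b.
  by rewrite scalerBl -addrA subrKA addrC subrKA.
have := le_trans (ler_normD _ _) (lerD sbx ud).
have : `|(r - s) *: b| = r - s by rewrite normrZ b1 mulr1 ger0_norm // subr_ge0 ge_min lexx.
have := ler_normD (s *: b + t *: x + (u - r *: b)) ((r - s) *: b); lra.
Qed.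

Lemma norm_addZ_le_of_rays (D : set X) u x c t : `|u| <= 1 ->
  (forall b, D b -> [/\ `|b| = 1, `|b + x| <= c & `|b - x| <= c]) ->
  (forall d, 0 < d -> exists2 b, D b & exists2 r, 0 <= r & `|u - r *: b| <= d) ->
  `|t| <= 1 -> `|u + t *: x| <= c.
Proof.
move=> u1 Dx uD t1; apply/ler_addgt0Pr => e e_gt0.
have [|b /Dx[b1 bxc bxc'] [r r_ge0 ud]] := uD (e / 2); first by rewrite divr_gt0.
have := norm_addZ_le_of_near_ray u1 b1 r_ge0 ud bxc bxc' t1; lra.
Qed.

End SquareGeometry.

Lemma norm_normalize {R : realType} {V : normedModType R} (v : V) :
  v != 0 -> `| `|v|^-1 *: v| = 1.
Proof. by move=> v_neq0; rewrite normrZ normfV normr_id mulVf ?normr_eq0. Qed.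

Section InjectiveTensor.
Context {R : realType} {X Y : normedModType R}.
Implicit Types (T : (Y -> R) -> X) (phi : Y -> R) (x : X) (y : Y).

Definition rat_comb {n} (xs : 'I_n -> X) (q : seq rat) : X :=
  \sum_(i < n) ratr (nth 0 q i) *: xs i.

Definition normalize_or x1 x : X := if x == 0 then x1 else `|x|^-1 *: x.

Lemma norm_normalize_or x1 x : `|x1| = 1 -> `|normalize_or x1 x| = 1.
Proof.
by rewrite /normalize_or; case: eqP => // /eqP /norm_normalize.
Qed.

Lemma normalize_orK x1 x : `|x| *: normalize_or x1 x = x.
Proof.
rewrite /normalize_or; case: eqP => [->|/eqP x_neq0]; first by rewrite normr0 scale0r.
by rewrite scalerA mulfV ?normr_eq0 // scale1r.
Qed.

Lemma finite_rank_le {n} (xs : 'I_n -> X) (ys : 'I_n -> Y) phi : dual_ball phi ->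
  `|\sum_(i < n) phi (ys i) *: xs i| <= \sum_(i < n) `|ys i| * `|xs i|.
Proof.
move=> [Dphi phi1]; apply: le_trans (ler_norm_sum _ _ _) _.
apply: ler_sum => i _; rewrite normrZ; apply: ler_wpM2r => //.
apply: le_trans (dual_le_dnormM Dphi _) _.
by rewrite ler_piMl // dnorm_ge0.
Qed.

Lemma rat_comb_approx {n} (a : 'I_n -> R) (xs : 'I_n -> X) d : 0 < d ->
  exists q, `|\sum_(i < n) a i *: xs i - rat_comb xs q| <= d.
Proof.
move=> d_gt0; pose e := d / (\sum_(i < n) `|xs i| + 1).
have S_ge0 : 0 <= \sum_(i < n) `|xs i| by apply: sumr_ge0.
have e_gt0 : 0 < e by rewrite divr_gt0 //; lra.
have /choice [q qa] : forall i, exists q : rat, `|a i - ratr q| < e.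
  move=> i; have [|q] := @rat_in_itvoo R (a i - e) (a i + e); first lra.
  rewrite in_itv /= => /andP[? ?]; exists q.
  by rewrite ltr_norml; apply/andP; split; lra.
exists [seq q i | i <- enum 'I_n]; rewrite /rat_comb -sumrB.
apply: le_trans (ler_norm_sum _ _ _) _.
apply: (@le_trans _ _ (\sum_(i < n) e * `|xs i|)).
  apply: ler_sum => i _; rewrite -scalerBl normrZ (nth_map i) ?size_enum_ord //.
  by rewrite nth_ord_enum ler_wpM2r // ltW.
rewrite -mulr_sumr /e mulrAC ler_pdivrMr; last lra.
by rewrite mulrDr mulr1 lerDl ltW.
Qed.

Lemma bdd_op_rat_approx {T n} {xs : 'I_n -> X} {ys : 'I_n -> Y} {phi d} :
  bdd_op T -> dual_ball phi ->
  opnorm (fun psi => T psi - \sum_(i < n) psi (ys i) *: xs i) < d ->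
  exists q, `|T phi - rat_comb xs q| <= 2 * d.
Proof.
move=> /bdd_op_bounded[B TB] phi1 Td.
have {}Td : `|T phi - \sum_(i < n) phi (ys i) *: xs i| < d.
  apply: le_lt_trans Td; apply: (le_opnorm (B := B + \sum_(i < n) `|ys i| * `|xs i|)) => //.
  move=> psi psi1; apply: le_trans (ler_normB _ _) _.
  exact: lerD (TB _ psi1) (finite_rank_le xs ys psi psi1).
have d_gt0 : 0 < d by apply: le_lt_trans Td.
have [q qd] := rat_comb_approx (fun i => phi (ys i)) xs d d_gt0.
exists q; apply: le_trans (ler_distD _ _ _) _; lra.
Qed.

Definition countable_ray_net T (D : set X) : Prop :=
  [/\ countable D, forall b, D b -> `|b| = 1 &
    forall phi, dual_ball phi -> forall d, 0 < d ->
      exists2 b, D b & exists2 r, 0 <= r & `|T phi - r *: b| <= d].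

Lemma inj_tensor_ray_net x1 T : `|x1| = 1 -> inj_tensor T ->
  exists D, countable_ray_net T D.
Proof.
move=> x1_unit [Tbdd Tapprox].
have /choice [apx apxP] : forall k : nat,
    exists s : {n : nat & ('I_n -> X) * ('I_n -> Y)},
    opnorm (fun phi => T phi - \sum_(i < projT1 s) phi ((projT2 s).2 i) *: (projT2 s).1 i)
      < k.+1%:R^-1.
  move=> k; have [|n [xs [ys Tk]]] := Tapprox k.+1%:R^-1; first by rewrite invr_gt0.
  by exists (existT _ n (xs, ys)).
pose v (kq : nat * seq rat) := rat_comb (projT2 (apx kq.1)).1 kq.2.
exists [set normalize_or x1 (v kq) | kq in [set: nat * seq rat]]; split.
- exact: card_le_trans (card_image_le _ _) (countableP _).
- by move=> _ [kq _ <-]; exact: norm_normalize_or.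
move=> phi phi1 d d_gt0; pose k := Num.truncn (2 / d).
have k_gt : k.+1%:R^-1 < d / 2.
  rewrite -[d / 2]invrK invf_div ltf_pV2 ?posrE ?divr_gt0 ?ltr0n //.
  exact: truncnS_gt.
have [q Tq] := bdd_op_rat_approx Tbdd phi1 (lt_trans (apxP k) k_gt).
exists (normalize_or x1 (v (k, q))); first by exists (k, q).
by exists `|v (k, q)|; rewrite ?normalize_orK //; move: Tq; rewrite /v /=; lra.
Qed.

Definition elem_tensor y0 x0 : (Y -> R) -> X :=
  fun phi => if `[< dual phi >] then phi y0 *: x0 else 0.

Lemma elem_tensorE y0 x0 phi : dual phi -> elem_tensor y0 x0 phi = phi y0 *: x0.
Proof. by rewrite /elem_tensor => /asboolT ->. Qed.

Lemma elem_tensor_le y0 x0 phi : dual_ball phi ->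
  `|elem_tensor y0 x0 phi| <= `|y0| * `|x0|.
Proof.
move=> [Dphi phi1]; rewrite elem_tensorE // normrZ ler_wpM2r //.
apply: le_trans (dual_le_dnormM Dphi y0) _.
by rewrite ler_piMl.
Qed.

Lemma inj_tensor_elem_tensor y0 x0 : inj_tensor (elem_tensor y0 x0).
Proof.
have bdd : bdd_op (elem_tensor y0 x0).
  split=> [phi /asboolPn nD|]; first by rewrite /elem_tensor ifN.
  split=> [a phi psi Dphi Dpsi|].
    rewrite !elem_tensorE //=; last exact: dualD_scale.
    by rewrite scalerDl scalerA.
  exists (`|y0| * `|x0|) => phi Dphi; rewrite elem_tensorE // normrZ mulrAC.
  by rewrite ler_wpM2r // mulrC dual_le_dnormM.
split=> // e e_gt0; exists 1%N, (fun=> x0), (fun=> y0).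
apply: le_lt_trans e_gt0; apply: opnorm_le => phi [Dphi _].
by rewrite big_ord1 elem_tensorE // subrr normr0.
Qed.

Lemma opnorm_elem_tensor y0 x0 : opnorm (elem_tensor y0 x0) = `|y0| * `|x0|.
Proof.
apply/le_anti/andP; split; first exact/opnorm_le/elem_tensor_le.
have [psi psi1 psi_y0] := exists_norming_dual y0.
have := le_opnorm (elem_tensor_le y0 x0) psi1.
by rewrite elem_tensorE ?psi_y0 ?normrZ ?normr_id //; case: psi1.
Qed.

Lemma opnorm_elem_tensorD_le T y0 x0 c : `|y0| <= 1 ->
  (forall phi, dual_ball phi -> forall t, `|t| <= 1 -> `|T phi + t *: x0| <= c) ->
  opnorm (T + elem_tensor y0 x0) <= c /\ opnorm (T - elem_tensor y0 x0) <= c.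
Proof.
move=> y0_le1 Tx0c.
have phi_y0 phi : dual_ball phi -> `|phi y0| <= 1.
  by move=> [Dphi phi1]; apply: le_trans (dual_le_dnorm Dphi _ y0_le1) phi1.
split; apply: opnorm_le => phi phi1; have [Dphi _] := phi1.
  by rewrite !fctE elem_tensorE //; apply: Tx0c => //; exact: phi_y0.
rewrite !fctE elem_tensorE // -scaleNr; apply: Tx0c => //.
by rewrite normrN; exact: phi_y0.
Qed.

End InjectiveTensor.

Definition SQ_bound_lt {R : realType} {V : zmodType} (Z : set V) (N : V -> R)
    (K : Type) (c : R) : Prop :=
  forall A : set V, A `<=` Z -> (forall x, A x -> N x = 1) -> card_lt_type A K ->
  exists y, Z y /\ N y = 1 /\ forall x, A x -> N (x + y) <= c /\ N (x - y) <= c.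

Lemma SQ_ltE {R : realType} (V : zmodType) (Z : set V) (N : V -> R) K :
  SQ_lt Z N K = SQ_bound_lt Z N K 1.
Proof. by []. Qed.

Lemma ASQ_ltP {R : realType} (V : zmodType) (Z : set V) (N : V -> R) K :
  ASQ_lt Z N K <-> forall e, 0 < e -> SQ_bound_lt Z N K (1 + e).
Proof.
by split=> [hZ e e_gt0 A AZ AN AK|hZ A AZ AN AK e e_gt0]; [exact: hZ|exact: hZ].
Qed.

Theorem inj_tensor_SQ_bound_lt {R : realType} (K : Type)
    (X Y : normedModType R) (c : R) :
  ~ countable [set: K] -> (exists x : X, x != 0) -> (exists y : Y, y != 0) ->
  SQ_bound_lt [set: X] (fun x => `|x|) K c ->
  SQ_bound_lt (@inj_tensor R X Y) (@opnorm R X Y) K c.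
Proof.
move=> Kunc [x /norm_normalize x1_unit] [y /norm_normalize y0_unit] sqX A At An AK.
have /choice [D DP] : forall T : (Y -> R) -> X,
    exists D, inj_tensor T -> countable_ray_net T D.
  move=> T; have [/(inj_tensor_ray_net _ _ x1_unit)[D DP]|] := pselect (inj_tensor T).
    by exists D.
  by exists set0.
have Dcount T : A T -> countable (D T) by move=> /At/DP[].
have Dunit b : (\bigcup_(T in A) D T) b -> `|b| = 1.
  by move=> [T /At/DP[_ + _]]; apply.
have [x0 [_ [x0_unit Bx0]]] :=
  sqX _ (subsetT _) Dunit (card_lt_type_bigcup_countable Kunc AK Dcount).
exists (elem_tensor (`|y|^-1 *: y) x0); split; first exact: inj_tensor_elem_tensor.
split; first by rewrite opnorm_elem_tensor y0_unit x0_unit mulr1.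
move=> T AT; apply: opnorm_elem_tensorD_le; first by rewrite y0_unit.
move=> phi phi1 t t1; have /DP[_ D_unit D_rays] := At T AT.
apply: (norm_addZ_le_of_rays (D T)) => // [|b Db|].
- by rewrite -(An T AT); exact: bdd_op_le_opnorm (At T AT).1 phi1.
- by have [Bb_p Bb_m] := Bx0 b (ex_intro2 _ _ T AT Db); split=> //; exact: D_unit.
- exact: D_rays.
Qed.

Theorem corollary4p7 (R : realType) (K : Type)
  (X Y : completeNormedModType R) :
  ~ countable [set: K] ->
  (exists x : X, x != 0) -> (exists y : Y, y != 0) ->
  (ASQ_lt [set: X] (fun x => `|x|) K ->
     ASQ_lt (@inj_tensor R X Y) (@opnorm R X Y) K) /\
  (SQ_lt [set: X] (fun x => `|x|) K ->
     SQ_lt (@inj_tensor R X Y) (@opnorm R X Y) K).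
Proof.
move=> Kunc Xn Yn; split.
  move=> /ASQ_ltP asqX; apply/ASQ_ltP => e e_gt0.
  exact: inj_tensor_SQ_bound_lt Kunc Xn Yn (asqX e e_gt0).
by rewrite !SQ_ltE; exact: inj_tensor_SQ_bound_lt.
Qed.
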